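(* Let $\mathcal{T}$ be a finite total order, $\mathcal{G}$ a finite grid poset, and $S\subseteq\mathcal{T}\times\mathcal{G}$ a spread. If $x\in\operatorname{cover}S$, then $\pi_0(x)\in\pi_0\big(\min S\cup(\max S+e_0)\big)$. In particular the aligned subgrid $\pi_0\big(\min S\cup(\max S+e_0)\big)\times\mathcal{G}$ contains $\min S$ and $\operatorname{cover}S$.
   Context: Identify $\mathcal{T}=[m_0]=\{0<\dots<m_0-1\}$ and $\mathcal{G}=[m_1]\times\cdots\times[m_n]$, with product order on $\mathcal{T}\times\mathcal{G}$; $\pi_0:\mathcal{T}\times\mathcal{G}\to\mathcal{T}$ is the first projection. For $x\in\mathcal{T}\times\mathcal{G}$, $x+e_0$ is $x$ with its $0$-th coordinate replaced by $\min(m_0-1,\pi_0(x)+1)$, and $X+e_0=\{x+e_0:x\in X\}$. $\uparrow X=\{p:\exists x\in X,x\le p\}$, $\operatorname{cover}X=\min(\uparrow X\setminus X)$. A spread is a nonempty subset that is convex ($s\le p\le s'$ with $s,s'\in S$ implies $p\in S$) and connected by zigzags of comparable elements. *)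

From mathcomp Require Import all_boot.
Set Implicit Arguments. Unset Strict Implicit. Unset Printing Implicit Defensive.

(* The poset T x G with T = [m 0], G = [m 1] x ... x [m n].
   Points are finite functions 'I_n.+1 -> nat; coordinate 0 is the T-coordinate
   (pi_0). *)

Definition pt (n : nat) := {ffun 'I_n.+1 -> nat}.

Section Poset.
Variables (n : nat) (m : 'I_n.+1 -> nat).

Definition inP (p : pt n) : bool := [forall i, p i < m i].

Definition le_pt (x y : pt n) : bool := [forall i, x i <= y i].

Definition lt_pt (x y : pt n) : bool := (x != y) && le_pt x y.

Definition comparable_pt (x y : pt n) : bool := le_pt x y || le_pt y x.

Definition pi0 (x : pt n) : nat := x ord0.

Definition add_e0 (x : pt n) : pt n :=
  [ffun i => if i == ord0 then minn (m ord0).-1 (x ord0).+1 else x i].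

(* Subsets of the poset are represented as predicates on points that are
   contained in the poset. *)
Definition up (X : pt n -> Prop) (p : pt n) : Prop :=
  inP p /\ exists2 x, X x & le_pt x p.

Definition min_of (X : pt n -> Prop) (p : pt n) : Prop :=
  X p /\ forall q, X q -> ~ lt_pt q p.

Definition max_of (X : pt n -> Prop) (p : pt n) : Prop :=
  X p /\ forall q, X q -> ~ lt_pt p q.

Definition coverset (X : pt n -> Prop) : pt n -> Prop :=
  min_of (fun p => up X p /\ ~ X p).

Definition is_spread (S : pt n -> Prop) : Prop :=
  (forall p, S p -> inP p) /\
  (exists s, S s) /\
  (forall s p s', S s -> S s' -> inP p -> le_pt s p -> le_pt p s' -> S p) /\
  (forall s s', S s -> S s' ->
     exists zs : seq (pt n),
       path comparable_pt s zs /\ (forall z, z \in zs -> S z) /\ last s zs = s').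

Definition pi0_aligned (S : pt n -> Prop) (t : nat) : Prop :=
  exists y, (min_of S y \/ exists2 z, max_of S z & y = add_e0 z) /\ pi0 y = t.

End Poset.

(* Let x be in cover S and let y be a minimal element of S below x. If
   pi0 y = pi0 x we are done. Otherwise the point x' obtained from x by lowering
   its T-coordinate by one still lies above y, so x' is in the up-set of S and
   strictly below x; minimality of x in cover S forces x' to lie in S. A maximal
   element z of S above x' has pi0 z = pi0 x - 1, since pi0 z >= pi0 x would put x
   between x' and z, hence in S by convexity. Then pi0 (z + e0) = pi0 x. *)
From Stdlib Require Import Classical.
From mathcomp Require Import all_boot.
From mathcomp Require Import zify.
Set Implicit Arguments. Unset Strict Implicit. Unset Printing Implicit Defensive.

Lemma exists_minimal_by (T : Type) (R : T -> T -> Prop) (f : T -> nat)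
    (P : T -> Prop) s :
  (forall q p, P q -> P p -> R q p -> f q < f p) -> P s ->
  exists2 y, P y & forall q, P q -> ~ R q y.
Proof.
move=> f_mono; have [k] := ubnP (f s); elim: k s => // k IH s /ltnSE fs Ps.
case: (classic (exists2 q, P q & R q s)) => [[q Pq Rqs]|no_below].
  exact: IH q (leq_trans (f_mono _ _ Pq Ps Rqs) fs) Pq.
by exists s => // q Pq Rqs; apply: no_below; exists q.
Qed.

Lemma sum_ltn (I : finType) (F G : I -> nat) :
  (forall i, F i <= G i) -> (exists i, F i < G i) -> \sum_i F i < \sum_i G i.
Proof.
move=> FG [i FGi].
have [le_sum eq_sum] := leqif_sum (P := predT) (fun j _ => leqif_eq (FG j)).
rewrite ltn_neqAle le_sum andbT eq_sum; apply/forallP => /(_ i) /implyP.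
by move=> /(_ isT) /eqP FGi_eq; rewrite FGi_eq ltnn in FGi.
Qed.

Section Poset.
Variables (n : nat) (m : 'I_n.+1 -> nat).

Lemma le_pt_refl (x : pt n) : le_pt x x.
Proof. by apply/forallP. Qed.

Lemma le_pt_trans (x y z : pt n) : le_pt x y -> le_pt y z -> le_pt x z.
Proof.
by move=> /forallP xy /forallP yz; apply/forallP => i; apply: leq_trans (xy i) (yz i).
Qed.

Lemma lt_pt_le (x y : pt n) : lt_pt x y -> le_pt x y.
Proof. by case/andP. Qed.

Lemma lt_ptE (x y : pt n) :
  lt_pt x y <-> (forall i, x i <= y i) /\ exists i, x i < y i.
Proof.
split=> [/andP [ne /forallP le] | [le [i lt]]].
  split=> //; case: (pickP (fun i => x i < y i)) => [i lt | not_lt].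
    by exists i.
  case/eqP: ne; apply/ffunP => j; apply/eqP.
  by rewrite eqn_leq le /= leqNgt not_lt.
apply/andP; split; last exact/forallP.
by apply: contraTneq lt => ->; rewrite ltnn.
Qed.

Lemma inP_le (x y : pt n) : le_pt x y -> inP m y -> inP m x.
Proof.
by move=> /forallP xy /forallP ym; apply/forallP => i; apply: leq_ltn_trans (ym i).
Qed.

Lemma exists_min_of_below (P : pt n -> Prop) s :
  P s -> exists2 y, min_of P y & le_pt y s.
Proof.
move=> Ps.
have sum_mono q p : P q /\ le_pt q s -> P p /\ le_pt p s -> lt_pt q p ->
    \sum_i q i < \sum_i p i.
  by move=> _ _ /lt_ptE [le lt]; apply: sum_ltn.
have [y [Py ys] y_min] := exists_minimal_by sum_mono (conj Ps (le_pt_refl s)).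
exists y => //; split=> // q Pq qy.
exact: y_min q (conj Pq (le_pt_trans (lt_pt_le qy) ys)) qy.
Qed.

Lemma exists_max_of_above (P : pt n -> Prop) s :
  (forall p, P p -> inP m p) -> P s -> exists2 z, max_of P z & le_pt s z.
Proof.
move=> P_in Ps.
have gap_mono q p : P q /\ le_pt s q -> P p /\ le_pt s p -> lt_pt p q ->
    \sum_i (m i - q i) < \sum_i (m i - p i).
  move=> [Pq _] _ /lt_ptE [le [i lt]]; apply: sum_ltn.
    by move=> j; apply: leq_sub2l.
  by exists i; move: (P_in q Pq) => /forallP /(_ i); lia.
have [z [Pz sz] z_max] := exists_minimal_by gap_mono (conj Ps (le_pt_refl s)).
exists z => //; split=> // q Pq zq.
exact: z_max q (conj Pq (le_pt_trans sz (lt_pt_le zq))) zq.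
Qed.

Definition set_pi0 (x : pt n) (t : nat) : pt n :=
  [ffun i => if i == ord0 then t else x i].

Lemma pi0_set_pi0 (x : pt n) t : pi0 (set_pi0 x t) = t.
Proof. by rewrite /pi0 ffunE eqxx. Qed.

Lemma set_pi0_id (x : pt n) : set_pi0 x (pi0 x) = x.
Proof. by apply/ffunP => i; rewrite ffunE; case: eqP => [->|]. Qed.

Lemma set_pi0K (x : pt n) t u : set_pi0 (set_pi0 x t) u = set_pi0 x u.
Proof. by apply/ffunP => i; rewrite !ffunE; case: eqP. Qed.

Lemma le_set_pi0 (x y : pt n) t :
  le_pt y x -> pi0 y <= t -> le_pt y (set_pi0 x t).
Proof.
move=> /forallP yx y0t; apply/forallP => i; rewrite ffunE.
by case: eqP => [->|_].
Qed.

Lemma set_pi0_le (x y : pt n) t :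
  le_pt x y -> t <= pi0 y -> le_pt (set_pi0 x t) y.
Proof.
move=> /forallP xy ty0; apply/forallP => i; rewrite ffunE.
by case: eqP => [->|_].
Qed.

Lemma pi0_le (x y : pt n) : le_pt x y -> pi0 x <= pi0 y.
Proof. by move=> /forallP; apply. Qed.

Lemma pi0_add_e0 (z : pt n) : pi0 (add_e0 m z) = minn (m ord0).-1 (pi0 z).+1.
Proof. by rewrite /pi0 ffunE eqxx. Qed.

Section Spread.
Variable S : pt n -> Prop.
Hypothesis S_in : forall p, S p -> inP m p.
Hypothesis S_convex : forall s p s', S s -> S s' -> inP m p ->
  le_pt s p -> le_pt p s' -> S p.

Lemma coverset_below_in (x p : pt n) :
  coverset m S x -> up m S p -> lt_pt p x -> S p.
Proof. by move=> [_ x_min] up_p px; apply: NNPP => Sp; apply: x_min px. Qed.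

Lemma pi0_lt_of_up_notin (x z : pt n) t :
  up m S x -> ~ S x -> S z -> le_pt (set_pi0 x t) z -> pi0 z < pi0 x.
Proof.
move=> [x_in [s Ss sx]] Sx Sz xz; rewrite ltnNge; apply/negP => x0z0.
apply: Sx (S_convex Ss Sz x_in sx _).
by rewrite -[x](set_pi0_id x) -(set_pi0K x t); apply: set_pi0_le.
Qed.

Lemma coverset_pi0_aligned (x : pt n) :
  coverset m S x -> pi0_aligned m S (pi0 x).
Proof.
move=> x_cov; have [[x_up Sx] _] := x_cov; have [x_in [s Ss sx]] := x_up.
have [y y_min yx] := exists_min_of_below Ss.
have {}yx := le_pt_trans yx sx.
have [y0x0 | y0x0] := eqVneq (pi0 y) (pi0 x); first by exists y; split; first left.
have {}y0x0 : pi0 y < pi0 x by rewrite ltn_neqAle y0x0 pi0_le.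
pose x' := set_pi0 x (pi0 x).-1.
have x'x : le_pt x' x by apply: set_pi0_le; [apply: le_pt_refl | lia].
have up_x' : up m S x'.
  split; first exact: inP_le x'x x_in.
  by exists y; [case: y_min | apply: le_set_pi0 => //; lia].
have Sx' : S x'.
  apply: coverset_below_in x_cov up_x' _; apply/lt_ptE; split.
    by apply/forallP.
  by exists ord0; rewrite -/(pi0 x') -/(pi0 x) pi0_set_pi0; lia.
have [z z_max x'z] := exists_max_of_above S_in Sx'.
have z0x0 := pi0_lt_of_up_notin x_up Sx (proj1 z_max) x'z.
have x'0z0 := pi0_le x'z; rewrite pi0_set_pi0 in x'0z0.
exists (add_e0 m z); split; first by right; exists z.
move: x_in => /forallP /(_ ord0); rewrite pi0_add_e0 -/(pi0 x); lia.
Qed.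

End Spread.
End Poset.

Theorem mainTheorem15 (n : nat) (m : 'I_n.+1 -> nat) (S : pt n -> Prop) :
  is_spread m S ->
  (forall x, coverset m S x -> pi0_aligned m S (pi0 x)) /\
  (forall x, (min_of S x \/ coverset m S x) -> pi0_aligned m S (pi0 x)).
Proof.
move=> [S_in [_ [S_convex _]]].
have cover_aligned := coverset_pi0_aligned S_in S_convex.
split=> // x [x_min | x_cov]; last exact: cover_aligned.
by exists x; split; first left.
Qed.
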